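(* If transformation graphs $G_1$ and $G_2$ reflect sequences of transitions $\sigma_1$ and $\sigma_2$ respectively, then $G_1\odot G_2$ reflects the concatenation $\sigma_1\sigma_2$.
   Context: Fix a finite set of clocks $X=\{x_0,x_1,\dots,x_m\}$, where $x_0$ is a special reference clock. A valuation is a map $v:X\to\mathbb{R}_{\ge 0}$ with $v(x_0)=0$. For $\delta\ge 0$, $v+\delta$ adds $\delta$ to every clock other than $x_0$; $[R]v$ sets the clocks of $R\subseteq X\setminus\{x_0\}$ to $0$. A guard is a conjunction of atomic constraints $x\sim c$ with $x\in X\setminus\{x_0\}$, $\sim\in\{<,\le,=,\ge,>\}$, $c\in\mathbb{N}$. A transition $t$ is a pair $(g,R)$ of a guard and a reset set $R\subseteq X\setminus\{x_0\}$; $v\xrightarrow{t}^{\delta}v'$ means $v+\delta\models g$ and $v'=[R](v+\delta)$. For $\sigma=t_1\cdots t_k$, $v_0\xrightarrow{\sigma}^{\delta}v_k$ means there are valuations $v_1,\dots,v_{k-1}$ and $\delta_i\ge0$ with $v_{i-1}\xrightarrow{t_i}^{\delta_i}v_i$ and $\delta=\sum_i\delta_i$. A loose valuation is a map $v:X\to\mathbb{R}$ with $v(x)\ge v(x_0)$ for all $x\in X$; $\mathit{norm}(v)$ is the valuation $x\mapsto v(x)-v(x_0)$. A weight is a pair $(\preccurlyeq,d)$ with $\preccurlyeq\in\{<,\le\}$, $d\in\mathbb{Z}$. A transformation graph with $k+1$ columns is a directed graph with vertex set $\{0,\dots,k\}\times X$ whose edges carry weights; vertex $(j,x)$ lies in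 column $j$. A solution of such a graph is a sequence $v_0,\dots,v_k$ of loose valuations such that for every edge $(i,x)\to(p,y)$ of weight $(\preccurlyeq,d)$ we have $v_p(y)-v_i(x)\preccurlyeq d$. A transformation graph with $k+1$ columns reflects a sequence $\sigma$ if (i) for every solution $v_0,\dots,v_k$ we have $\mathit{norm}(v_0)\xrightarrow{\sigma}^{\delta}\mathit{norm}(v_k)$ with $\delta=v_0(x_0)-v_k(x_0)$, and (ii) whenever $v_0\xrightarrow{\sigma}^{\delta}v'$ for valuations $v_0,v'$, there is a solution $v_0,u_1,\dots,u_k$ with $u_k=v'-\delta$, where $v'-\delta$ is the loose valuation $x\mapsto v'(x)-\delta$ for all $x\in X$ (including $x_0$). Composition: if $G_1$ has $k_1$ columns and $G_2$ has $k_2$ columns, $G_1\odot G_2$ is the transformation graph with vertex set $\{0,\dots,k_1+k_2-1\}\times X$ whose edges are: the edges of $G_1$ (on columns $0,\dots,k_1-1$); the edges of $G_2$ shifted by $k_1$ columns (an edge $(i,x)\to(j,y)$ of $G_2$ becomes $(i+k_1,x)\to(j+k_1,y)$ with the same weight); and, for every $x\in X$, edges $(k_1-1,x)\to(k_1,x)$ and $(k_1,x)\to(k_1-1,x)$ of weight $(\le,0)$. *)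

From mathcomp Require Import all_boot.
From Stdlib Require Import Reals.

Unset Implicit Arguments.
Unset Strict Implicit.
Unset Printing Implicit Defensive.

Section TimedDefs.

(* Clock set X (finite), with distinguished reference clock x0. *)
Variables (X : finType) (x0 : X).

Local Open Scope R_scope.

Definition is_valuation (v : X -> R) : Prop :=
  v x0 = 0 /\ forall x, 0 <= v x.

Definition delay (v : X -> R) (d : R) : X -> R :=
  fun x => if x == x0 then v x else v x + d.

Definition reset (Rs : {set X}) (v : X -> R) : X -> R :=
  fun x => if x \in Rs then 0 else v x.

Inductive cmp := CLt | CLe | CEq | CGe | CGt.

Definition cmp_sat (o : cmp) (a b : R) : Prop :=
  match o with
  | CLt => a < b | CLe => a <= b | CEq => a = b | CGe => a >= b | CGt => a > b
  end.

Record atom := Atom { at_clock : X; at_op : cmp; at_const : nat }.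

Definition guard := seq atom.

Definition guard_sat (v : X -> R) (g : guard) : Prop :=
  forall a, List.In a g -> cmp_sat (at_op a) (v (at_clock a)) (INR (at_const a)).

Record transition := Trans { tr_guard : guard; tr_reset : {set X} }.

Definition wf_transition (t : transition) : Prop :=
  x0 \notin tr_reset t /\ forall a, List.In a (tr_guard t) -> at_clock a != x0.

Definition step (v : X -> R) (t : transition) (d : R) (v' : X -> R) : Prop :=
  guard_sat (delay v d) (tr_guard t) /\
  forall x, v' x = reset (tr_reset t) (delay v d) x.

Fixpoint steps (v : X -> R) (s : seq transition) (d : R) (v' : X -> R) : Prop :=
  match s with
  | [::] => d = 0 /\ forall x, v' x = v x
  | t :: s' => exists (d1 : R) (v1 : X -> R),
      0 <= d1 /\ is_valuation v1 /\ step v t d1 v1 /\ steps v1 s' (d - d1) v'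
  end.

Definition is_loose (v : X -> R) : Prop := forall x, v x0 <= v x.

Definition norm (v : X -> R) : X -> R := fun x => v x - v x0.

Record weight := Weight { w_strict : bool; w_bound : Z }.

Definition weight_sat (w : weight) (a : R) : Prop :=
  if w_strict w then a < IZR (w_bound w) else a <= IZR (w_bound w).

(** Transformation graph with k+1 columns: vertex set {0..k} x X,
    at most one weighted edge per ordered pair of vertices. *)
Record tgraph := TGraph {
  tg_k : nat;
  tg_edge : 'I_tg_k.+1 -> X -> 'I_tg_k.+1 -> X -> option weight }.


Definition is_solution (G : tgraph) (vs : 'I_(tg_k G).+1 -> X -> R) : Prop :=
  (forall i, is_loose (vs i)) /\
  forall i x p y w, tg_edge G i x p y = Some w ->
    weight_sat w (vs p y - vs i x).

Definition reflects (G : tgraph) (s : seq transition) : Prop :=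
  (forall vs : 'I_(tg_k G).+1 -> X -> R, is_solution G vs ->
     steps (norm (vs ord0)) s (vs ord0 x0 - vs ord_max x0) (norm (vs ord_max)))
  /\
  (forall (v0 v' : X -> R) (d : R),
     is_valuation v0 -> is_valuation v' -> steps v0 s d v' ->
     exists vs : 'I_(tg_k G).+1 -> X -> R,
       is_solution G vs /\ (forall x, vs ord0 x = v0 x) /\
       (forall x, vs ord_max x = v' x - d)).

(** If G1 has k1+1 columns and G2 has k2+1 columns,
    the composition has (k1+1)+(k2+1) columns, i.e. index k = k1+k2+1:
    columns 0..k1 carry G1, columns k1+1..k1+k2+1 carry G2 shifted by k1+1,
    and columns k1, k1+1 are linked by (<=,0) edges in both directions. *)
Local Close Scope R_scope.

Definition compose (G1 G2 : tgraph) : tgraph :=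
  @TGraph (addn (tg_k G1) (tg_k G2)).+1
    (fun i x j y =>
       let k1 := tg_k G1 in
       if (i < k1.+1)%N && (j < k1.+1)%N then
         tg_edge G1 (inord i) x (inord j) y
       else if (k1.+1 <= i)%N && (k1.+1 <= j)%N then
         tg_edge G2 (inord (i - k1.+1)%N) x (inord (j - k1.+1)%N) y
       else if (x == y) && (((i == k1 :> nat) && (j == k1.+1 :> nat)) ||
                            ((i == k1.+1 :> nat) && (j == k1 :> nat))) then
         Some (Weight false 0%Z)
       else None).

End TimedDefs.

Arguments is_valuation {X}.
Arguments delay {X}.
Arguments reset {X}.
Arguments guard_sat {X}.
Arguments wf_transition {X}.
Arguments step {X}.
Arguments steps {X}.
Arguments is_loose {X}.
Arguments norm {X}.
Arguments tg_k {X}.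
Arguments tg_edge {X}.
Arguments is_solution {X}.
Arguments reflects {X}.
Arguments compose {X}.

(* A solution of [G1 (.) G2] restricts to solutions of [G1] and [G2] whose
   shared columns are forced equal by the two [(<=, 0)] link edges, so the
   two runs it yields concatenate into a run of [s1 ++ s2].  Conversely, a
   run of [s1 ++ s2] splits after [s1]; the solutions of [G1] and [G2] for
   the two halves glue column by column once the second is shifted by the
   delay [d1] of the first half, which preserves solutions since edges only
   constrain differences. *)
From mathcomp Require Import all_boot zify.
From Stdlib Require Import Reals Lra FunctionalExtensionality.

Set Implicit Arguments.

Section Runs.

Variables (X : finType) (x0 : X).

Local Open Scope R_scope.

Lemma steps_cat s1 s2 v w u d1 d2 :
  steps x0 v s1 d1 w -> steps x0 w s2 d2 u -> steps x0 v (s1 ++ s2) (d1 + d2) u.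
Proof.
elim: s1 v d1 => [|t s IH] v d1 /=.
- move=> [-> Ew]; have -> : w = v by apply: functional_extensionality.
  by rewrite Rplus_0_l.
- move=> [d [v1 [d_ge0 [v1_val [st run]]]]] run2.
  exists d, v1; do 3 split => //.
  have -> : d1 + d2 - d = (d1 - d) + d2 by ring.
  exact: IH run run2.
Qed.

Lemma steps_split s1 s2 v u d :
  is_valuation x0 v -> steps x0 v (s1 ++ s2) d u ->
  exists d1 w, is_valuation x0 w /\ steps x0 v s1 d1 w /\ steps x0 w s2 (d - d1) u.
Proof.
elim: s1 v d => [|t s IH] v d v_val /=.
- by exists 0, v; rewrite Rminus_0_r.
- move=> [d1 [v1 [d1_ge0 [v1_val [st run]]]]].
  have [d2 [w [w_val [run1 run2]]]] := IH _ _ v1_val run.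
  exists (d1 + d2), w; split; [done | split].
  + by exists d1, v1; do 3 split => //; have -> : d1 + d2 - d1 = d2 by ring.
  + by have -> : d - (d1 + d2) = d - d1 - d2 by ring.
Qed.

Lemma solution_shift (G : tgraph X) vs c :
  is_solution x0 G vs -> is_solution x0 G (fun i x => vs i x - c).
Proof.
move=> [loose edges]; split=> [i x | i x p y w /edges].
- by have := loose i x; lra.
- by have -> : vs p y - c - (vs i x - c) = vs p y - vs i x by ring.
Qed.

End Runs.

Section Composition.

Variables (X : finType) (x0 : X) (G1 G2 : tgraph X).

Local Notation k1 := (tg_k G1).
Local Notation k2 := (tg_k G2).
Local Notation G := (compose G1 G2).

Definition left_col (i : 'I_k1.+1) : 'I_(k1 + k2).+2 := inord i.
Definition right_col (j : 'I_k2.+1) : 'I_(k1 + k2).+2 := inord (j + k1.+1).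

Lemma left_colK i : left_col i = i :> nat.
Proof. by rewrite inordK //=; have := ltn_ord i; lia. Qed.

Lemma right_colK j : right_col j = j + k1.+1 :> nat.
Proof. by rewrite inordK //=; have := ltn_ord j; lia. Qed.

Lemma left_col_first : left_col ord0 = ord0.
Proof. by apply: ord_inj; rewrite left_colK. Qed.

Lemma right_col_last : right_col ord_max = ord_max.
Proof. by apply: ord_inj; rewrite right_colK /=; lia. Qed.

Lemma compose_edge_left i x p y :
  tg_edge G (left_col i) x (left_col p) y = tg_edge G1 i x p y.
Proof. by rewrite /= !left_colK !ltn_ord /= !inord_val. Qed.

Lemma compose_edge_right i x p y :
  tg_edge G (right_col i) x (right_col p) y = tg_edge G2 i x p y.
Proof.
rewrite /= !right_colK !addnK.
have -> : (i + k1.+1 < k1.+1)%N = false by lia.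
have -> : (k1 < i + k1.+1)%N && (k1 < p + k1.+1)%N by lia.
by rewrite /= !inord_val.
Qed.

Lemma compose_edge_link x :
  tg_edge G (left_col ord_max) x (right_col ord0) x = Some (Weight false 0) /\
  tg_edge G (right_col ord0) x (left_col ord_max) x = Some (Weight false 0).
Proof.
rewrite /= left_colK right_colK add0n !ltnn ltnSn !eqxx.
by rewrite (ltn_eqF (ltnSn k1)) (gtn_eqF (ltnSn k1)).
Qed.

Section Restriction.

Variable vs : 'I_(tg_k G).+1 -> X -> R.
Hypothesis vs_sol : is_solution x0 G vs.

Lemma solution_left : is_solution x0 G1 (fun i => vs (left_col i)).
Proof.
split=> [i | i x p y w]; first exact: vs_sol.1.
by rewrite -compose_edge_left => /vs_sol.2.
Qed.

Lemma solution_right : is_solution x0 G2 (fun j => vs (right_col j)).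
Proof.
split=> [j | i x p y w]; first exact: vs_sol.1.
by rewrite -compose_edge_right => /vs_sol.2.
Qed.

Lemma solution_link : vs (right_col ord0) = vs (left_col ord_max).
Proof.
apply: functional_extensionality => x.
have [le_lr le_rl] := compose_edge_link x.
move: (vs_sol.2 _ _ _ _ _ le_lr) (vs_sol.2 _ _ _ _ _ le_rl).
rewrite /weight_sat /=; lra.
Qed.

End Restriction.

Definition glue (vs1 : 'I_k1.+1 -> X -> R) (vs2 : 'I_k2.+1 -> X -> R)
    (i : 'I_(k1 + k2).+2) : X -> R :=
  if (i < k1.+1)%N then vs1 (inord i) else vs2 (inord (i - k1.+1)).

Lemma glue_first vs1 vs2 : glue vs1 vs2 ord0 = vs1 ord0.
Proof. by rewrite /glue /=; congr vs1; apply: val_inj; rewrite /= inordK. Qed.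

Lemma glue_last vs1 vs2 : glue vs1 vs2 ord_max = vs2 ord_max.
Proof.
rewrite /glue /=; have -> : ((k1 + k2).+1 < k1.+1)%N = false by lia.
by congr vs2; apply: val_inj; rewrite /= inordK; lia.
Qed.

Lemma solution_glue vs1 vs2 :
  is_solution x0 G1 vs1 -> is_solution x0 G2 vs2 ->
  vs1 ord_max = vs2 ord0 -> is_solution x0 G (glue vs1 vs2).
Proof.
move=> [loose1 edges1] [loose2 edges2] shared.
have max_col (i : 'I_(k1 + k2).+2) : i = k1 :> nat -> inord i = ord_max :> 'I_k1.+1.
  by move=> Ei; apply: val_inj; rewrite /= Ei inordK.
have min_col (i : 'I_(k1 + k2).+2) : i = k1.+1 :> nat -> inord (i - k1.+1) = ord0 :> 'I_k2.+1.
  by move=> Ei; apply: val_inj; rewrite /= Ei subnn inordK.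
split=> [i | i x p y w]; first by rewrite /glue; case: ifP.
rewrite /= /glue; case: (ltnP i k1.+1) => Hi; case: (ltnP p k1.+1) => Hp //=;
  [exact: edges1 | | | exact: edges2];
  case: ifP => // /andP [/eqP <- /orP [] /andP [/eqP Ei /eqP Ep]] [<-];
  try by [move: Hi; rewrite Ei; lia | move: Hp; rewrite Ep; lia].
all: by rewrite max_col // min_col // shared /weight_sat /=; lra.
Qed.

End Composition.

Theorem mainTheorem6 (X : finType) (x0 : X) (G1 G2 : tgraph X)
  (s1 s2 : seq (transition X)) :
  (forall t, List.In t s1 -> wf_transition x0 t) ->
  (forall t, List.In t s2 -> wf_transition x0 t) ->
  reflects x0 G1 s1 -> reflects x0 G2 s2 ->
  reflects x0 (compose G1 G2) (s1 ++ s2).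
Proof.
move=> _ _ [sound1 complete1] [sound2 complete2]; split.
- move=> vs vs_sol.
  have run1 := sound1 _ (solution_left vs_sol).
  have run2 := sound2 _ (solution_right vs_sol).
  rewrite (solution_link vs_sol) in run2.
  rewrite left_col_first right_col_last in run1 run2.
  have -> : (vs ord0 x0 - vs ord_max x0 =
    (vs ord0 x0 - vs (left_col G1 G2 ord_max) x0) +
    (vs (left_col G1 G2 ord_max) x0 - vs ord_max x0))%R by ring.
  exact: steps_cat run1 run2.
- move=> v0 v' d v0_val v'_val /(steps_split _ _ _ _ v0_val) [d1 [w [w_val [run1 run2]]]].
  have [vs1 [sol1 [first1 last1]]] := complete1 _ _ _ v0_val w_val run1.
  have [vs2 [sol2 [first2 last2]]] := complete2 _ _ _ w_val v'_val run2.
  exists (glue G1 G2 vs1 (fun j x => vs2 j x - d1)%R); split; [|split] => [|x|x].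
  + apply: solution_glue sol1 (solution_shift d1 sol2) _.
    by apply: functional_extensionality => x; rewrite last1 first2.
  + by rewrite glue_first first1.
  + by rewrite glue_last last2; lra.
Qed.
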